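(* Let $j^1,j^2$ be twice differentiable functions of $(\rho_1,\rho_2)$ near a point, and at that point write $j^\alpha_\beta=\partial j^\alpha/\partial\rho_\beta$, $j^\alpha_{\beta\gamma}=\partial^2 j^\alpha/\partial\rho_\beta\partial\rho_\gamma$. Assume $j^1_2\,j^2_1\neq0$ and $\Delta^2:=(j^1_1-j^2_2)^2+4j^1_2j^2_1>0$, $\Delta>0$. Let $\mathbf{R}$ be any invertible $2\times2$ matrix with $\mathbf{R}\mathbf{J}\mathbf{R}^{-1}=\mathrm{diag}(v_+,v_-)$, $v_\pm=\tfrac12(j^1_1+j^2_2\pm\Delta)$, and let $\mathbf{G}^1,\mathbf{G}^2$ be the associated mode coupling matrices. Then: (a) $G^1_{11}=G^2_{22}=0$ if and only if $$j^2_1(2j^1_{12}+j^2_{22})+j^1_2j^2_{11}-j^1_{11}(j^2_2-j^1_1)=0\quad\text{and}\quad j^1_2(2j^2_{12}+j^1_{11})+j^2_1j^1_{22}+j^2_{22}(j^2_2-j^1_1)=0.$$ (b) Assume the two conditions in (a) hold, and set $P:=(j^2_1)^2j^1_{22}+j^1_2j^2_1j^1_{11}$ and $Q:=j^2_1j^2_{22}+j^1_2j^2_{11}$. Then - $G^1_{22}=0$ if and only if $P=\tfrac12(j^1_1-j^2_2-\Delta)\,Q$; - $G^2_{11}=0$ if and only if $P=\tfrac12(j^1_1-j^2_2+\Delta)\,Q$. Consequently: $G^1_{22}=G^2_{11}=0$ iff $j^2_1j^1_{22}+j^1_2j^1_{11}=0$ and $j^2_1j^2_{22}+j^1_2j^2_{11}=0$;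 $G^1_{22}=0\neq G^2_{11}$ iff $P=\tfrac12(j^1_1-j^2_2-\Delta)Q$ and $Q\neq0$; $G^1_{22}\neq0=G^2_{11}$ iff $P=\tfrac12(j^1_1-j^2_2+\Delta)Q$ and $Q\neq0$; and $G^1_{22}\neq0\neq G^2_{11}$ iff $P\neq\tfrac12(j^1_1-j^2_2\pm\Delta)Q$ for both signs.
   Context: $\mathbf{J}=\begin{pmatrix} j^1_1 & j^1_2\\ j^2_1 & j^2_2\end{pmatrix}$ is the current Jacobian, $\mathbf{H}^\lambda$ ($\lambda=1,2$) is the Hessian matrix with entries $H^\lambda_{\beta\gamma}=j^\lambda_{\beta\gamma}$. For an invertible diagonalizer $\mathbf{R}$ (its first row is a left eigenvector of $\mathbf{J}$ for $v_+$, its second row a left eigenvector for $v_-$), the mode coupling matrices are $\mathbf{G}^\alpha=\tfrac12\sum_{\lambda=1}^2R_{\alpha\lambda}(\mathbf{R}^{-1})^T\mathbf{H}^\lambda\mathbf{R}^{-1}$, $\alpha=1,2$, with entries $G^\alpha_{\beta\gamma}$; whether a given entry vanishes does not depend on the normalization of the rows of $\mathbf{R}$. (Interpretation in mode coupling theory, not needed for the claim: the case $G^1_{11}=G^2_{22}=0$ is the non-KPZ case; within it, $G^1_{22}=G^2_{11}=0$ corresponds to two diffusive modes, exactly one vanishing corresponds to one diffusive and one $z=3/2$ Lévy mode, and both nonzero to two golden-mean Lévy modes.) *)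

(* algebraic statement over an arbitrary real field. *)
From HB Require Import structures.
From mathcomp Require Import all_boot all_order all_algebra.
Set Implicit Arguments. Unset Strict Implicit. Unset Printing Implicit Defensive.
Import Order.TTheory GRing.Theory Num.Theory.
Local Open Scope ring_scope.

(* Index 1 and 2 of the paper correspond to ord0 and ord_max in 'I_2. *)
Definition i1 : 'I_2 := @ord0 1.
Definition i2 : 'I_2 := @ord_max 1.

Definition Jmat {R : ringType} (j11 j12 j21 j22 : R) : 'M[R]_2 :=
  \matrix_(a < 2, b < 2)
    if a == i1 then (if b == i1 then j11 else j12)
    else (if b == i1 then j21 else j22).

Definition symmat {R : ringType} (x11 x12 x22 : R) : 'M[R]_2 :=
  \matrix_(b < 2, c < 2)
    if (b == i1) && (c == i1) then x11
    else if (b == i2) && (c == i2) then x22 else x12.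

(* Hessians H^1, H^2 : H^lam_{beta gamma} = j^lam_{beta gamma}. *)
Definition Hmats {R : ringType} (h111 h112 h122 h211 h212 h222 : R)
  (lam : 'I_2) : 'M[R]_2 :=
  if lam == i1 then symmat h111 h112 h122 else symmat h211 h212 h222.

Definition diag2 {R : ringType} (x y : R) : 'M[R]_2 :=
  \matrix_(a < 2, b < 2) if a == b then (if a == i1 then x else y) else 0.

Definition Gmat {R : fieldType} (Rm : 'M[R]_2) (H : 'I_2 -> 'M[R]_2)
  (alpha : 'I_2) : 'M[R]_2 :=
  2^-1 *: \sum_(lam < 2) (Rm alpha lam *: ((invmx Rm)^T *m H lam *m invmx Rm)).

From HB Require Import structures.
From mathcomp Require Import all_boot all_order all_algebra.
From mathcomp Require Import ring.
Set Implicit Arguments.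
Unset Strict Implicit.
Unset Printing Implicit Defensive.
Import Order.TTheory GRing.Theory Num.Theory.
Local Open Scope ring_scope.

(* Row a of R is a left eigenvector of J and column b of R^-1 a right
   eigenvector, so R_{a2} j^2_1 = s_a R_{a1} and (R^-1)_{2b} j^1_2 = s_b (R^-1)_{1b}
   with s := v - j^1_1.  Hence each diagonal entry G^a_{bb} is a nonzero multiple
   of the polynomial F(s_a, s_b) := [mode_form s_a s_b], where s_+ and s_- are the two roots of
   s^2 - (j^2_2 - j^1_1) s - j^1_2 j^2_1.  Modulo this quadratic, F(s, s) is affine
   in s, so it vanishes at both roots iff both its coefficients, i.e. the
   conditions of (a), vanish.  Using those conditions to eliminate j^1_{12} and
   j^2_{12}, F(s_a, s_b) becomes a nonzero multiple of P + s_a Q, which gives (b);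
   the four cases then follow from s_+ <> s_-. *)

Lemma ord2_cases (a : 'I_2) : a = i1 \/ a = i2.
Proof. by case: a => -[|[|//]] ?; [left | right]; apply: val_inj. Qed.

Lemma sum_ord2 (V : zmodType) (F : 'I_2 -> V) : \sum_(i < 2) F i = F i1 + F i2.
Proof. by rewrite big_ord_recl big_ord1; congr (_ + F _); apply: val_inj. Qed.

Section Diagonalization.
Variable R : fieldType.

Definition eigval (x y : R) (a : 'I_2) : R := if a == i1 then x else y.

Lemma mul_diag2_mx (x y : R) (M : 'M[R]_2) a b :
  (diag2 x y *m M) a b = eigval x y a * M a b.
Proof.
rewrite !mxE sum_ord2 !mxE /eigval.
by case: (ord2_cases a) => ->; rewrite /= ?mul0r ?add0r ?addr0.
Qed.

Lemma mul_mx_diag2 (x y : R) (M : 'M[R]_2) a b :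
  (M *m diag2 x y) a b = M a b * eigval x y b.
Proof.
rewrite !mxE sum_ord2 !mxE /eigval.
by case: (ord2_cases b) => ->; rewrite /= ?mulr0 ?add0r ?addr0.
Qed.

Variables (Rm J : 'M[R]_2) (x y : R).
Hypotheses (unitR : Rm \in unitmx) (diagR : Rm *m J *m invmx Rm = diag2 x y).

Lemma diag2_conj_left : Rm *m J = diag2 x y *m Rm.
Proof. by rewrite -diagR -(mulmxA (Rm *m J)) mulVmx // mulmx1. Qed.

Lemma diag2_conj_right : J *m invmx Rm = invmx Rm *m diag2 x y.
Proof. by rewrite -diagR !mulmxA mulVmx // mul1mx. Qed.

Lemma unitmx2_row (a : 'I_2) : Rm a i1 = 0 -> Rm a i2 = 0 -> False.
Proof.
move=> r1 r2; have := congr1 (fun M : 'M[R]_2 => M a a) (mulmxV unitR).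
by rewrite !mxE sum_ord2 r1 r2 !mul0r addr0 eqxx => /esym/eqP; rewrite oner_eq0.
Qed.

Lemma invmx2_col (b : 'I_2) : invmx Rm i1 b = 0 -> invmx Rm i2 b = 0 -> False.
Proof.
move=> c1 c2; have := congr1 (fun M : 'M[R]_2 => M b b) (mulmxV unitR).
by rewrite !mxE sum_ord2 c1 c2 !mulr0 addr0 eqxx => /esym/eqP; rewrite oner_eq0.
Qed.

End Diagonalization.

Section JacobianEigenvectors.
Variables (R : fieldType) (j11 j12 j21 j22 x y : R) (Rm : 'M[R]_2).
Hypotheses (n12 : j12 != 0) (n21 : j21 != 0) (unitR : Rm \in unitmx).
Hypothesis diagR : Rm *m Jmat j11 j12 j21 j22 *m invmx Rm = diag2 x y.

Lemma left_eigvec_Jmat a : Rm a i2 * j21 = (eigval x y a - j11) * Rm a i1.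
Proof.
have := congr1 (fun M : 'M[R]_2 => M a i1) (diag2_conj_left unitR diagR).
rewrite mul_diag2_mx !mxE sum_ord2 !mxE /= => e.
by rewrite mulrBl -e; ring.
Qed.

Lemma right_eigvec_Jmat b :
  invmx Rm i2 b * j12 = (eigval x y b - j11) * invmx Rm i1 b.
Proof.
have := congr1 (fun M : 'M[R]_2 => M i1 b) (diag2_conj_right unitR diagR).
rewrite mul_mx_diag2 !mxE sum_ord2 !mxE /= => e.
by rewrite mulrBl [_ * invmx Rm i1 b]mulrC -e; ring.
Qed.

Lemma left_eigvec_head_neq0 a : Rm a i1 != 0.
Proof.
apply/eqP=> r1; apply: (unitmx2_row unitR r1); apply/eqP.
by rewrite -(mulIr_eq0 _ (mulIf n21)) left_eigvec_Jmat r1 mulr0.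
Qed.

Lemma right_eigvec_head_neq0 b : invmx Rm i1 b != 0.
Proof.
apply/eqP=> c1; apply: (invmx2_col unitR c1); apply/eqP.
by rewrite -(mulIr_eq0 _ (mulIf n12)) right_eigvec_Jmat c1 mulr0.
Qed.

End JacobianEigenvectors.

Lemma mulf_eq0_iff (R : idomainType) (k z : R) : k != 0 -> k * z = 0 <-> z = 0.
Proof. by move=> nk; split=> [/eqP|->]; rewrite ?mulr0 // mulf_eq0 (negbTE nk) => /eqP. Qed.

Lemma affine_eq0_at2 (R : idomainType) (a b s1 s2 : R) : s1 != s2 ->
  (a + s1 * b = 0 /\ a + s2 * b = 0) <-> (a = 0 /\ b = 0).
Proof.
move=> ns; split=> [[e1 e2] | [-> ->]]; last by split; rewrite mulr0 addr0.
have b0 : b = 0.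
  have nd : s1 - s2 != 0 by rewrite subr_eq0.
  apply/(mulf_eq0_iff _ nd).
  by transitivity ((a + s1 * b) - (a + s2 * b)); [ring | rewrite e1 e2 subrr].
by move: e1; rewrite b0 mulr0 addr0.
Qed.

Section ModeForm.
Variables (R : numFieldType) (j11 j12 j21 j22 h111 h112 h122 h211 h212 h222 : R).

(* j^2_1 H^1 + sa H^2 evaluated as a quadratic form at the rescaled right
   eigenvector (j^1_2, sb). *)
Definition mode_form (sa sb : R) : R :=
  j21 * (j12 ^+ 2 * h111 + 2 * j12 * h112 * sb + h122 * sb ^+ 2)
  + sa * (j12 ^+ 2 * h211 + 2 * j12 * h212 * sb + h222 * sb ^+ 2).

Lemma Gmat_diag_mode_form (Rm : 'M[R]_2) a b sa sb :
  j12 != 0 -> j21 != 0 ->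
  Rm a i2 * j21 = sa * Rm a i1 ->
  invmx Rm i2 b * j12 = sb * invmx Rm i1 b ->
  Gmat Rm (Hmats h111 h112 h122 h211 h212 h222) a b b =
  Rm a i1 * invmx Rm i1 b ^+ 2 / (2 * j21 * j12 ^+ 2) * mode_form sa sb.
Proof.
move=> n12 n21 eR eL.
rewrite /Gmat /Hmats !mxE summxE sum_ord2 !mxE !sum_ord2 !mxE !sum_ord2 !mxE /=.
have -> : Rm a i2 = sa * Rm a i1 / j21 by rewrite -eR mulfK.
have -> : invmx Rm i2 b = sb * invmx Rm i1 b / j12 by rewrite -eL mulfK.
by rewrite /mode_form; field; rewrite n12 n21.
Qed.

Lemma mode_form_root s : s ^+ 2 = (j22 - j11) * s + j12 * j21 ->
  mode_form s s =
  j12 * j21 * (j12 * (2 * h212 + h111) + j21 * h122 + h222 * (j22 - j11))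
  + s * (j12 * (j21 * (2 * h112 + h222) + j12 * h211 - h111 * (j22 - j11))
         + (j22 - j11) * (j12 * (2 * h212 + h111) + j21 * h122 + h222 * (j22 - j11))).
Proof.
move=> quad; apply/eqP; rewrite -subr_eq0; apply/eqP.
transitivity ((s ^+ 2 - ((j22 - j11) * s + j12 * j21))
              * (h222 * s + j21 * h122 + 2 * j12 * h212 + h222 * (j22 - j11))).
  by rewrite /mode_form; ring.
by rewrite quad subrr mul0r.
Qed.

Variables (s1 s2 : R).
Hypotheses (n12 : j12 != 0) (n21 : j21 != 0) (ns : s1 != s2).
Hypotheses (sum_s : s1 + s2 = j22 - j11) (prod_s : s1 * s2 = - (j12 * j21)).

Lemma mode_form_diag_eq0 :
  (mode_form s1 s1 = 0 /\ mode_form s2 s2 = 0) <->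
  (j21 * (2 * h112 + h222) + j12 * h211 - h111 * (j22 - j11) = 0 /\
   j12 * (2 * h212 + h111) + j21 * h122 + h222 * (j22 - j11) = 0).
Proof.
have quad1 : s1 ^+ 2 = (j22 - j11) * s1 + j12 * j21.
  by rewrite -sum_s -[j12 * j21]opprK -prod_s; ring.
have quad2 : s2 ^+ 2 = (j22 - j11) * s2 + j12 * j21.
  by rewrite -sum_s -[j12 * j21]opprK -prod_s; ring.
rewrite (mode_form_root quad1) (mode_form_root quad2) affine_eq0_at2 //.
rewrite mulf_eq0_iff ?mulf_neq0 //.
split=> [[c2 /eqP] | [c1 c2]]; last by rewrite c1 c2 !mulr0 addr0.
by rewrite c2 mulr0 addr0 mulf_eq0 (negbTE n12) => /eqP.
Qed.

Hypotheses
  (cond1 : j21 * (2 * h112 + h222) + j12 * h211 - h111 * (j22 - j11) = 0)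
  (cond2 : j12 * (2 * h212 + h111) + j21 * h122 + h222 * (j22 - j11) = 0).

(* The conditions of (a) eliminate j^1_{12} and j^2_{12}, and the root
   relations eliminate j^1_1 and j^1_2. *)
Lemma mode_form_reduced :
  j21 * mode_form s1 s2 =
  - ((s1 - s2) * s2) * ((j21 ^+ 2 * h122 + j12 * j21 * h111)
                        + s1 * (j21 * h222 + j12 * h211)).
Proof.
have e112 : h112 = (h111 * (j22 - j11) - j21 * h222 - j12 * h211) / (2 * j21).
  rewrite -[LHS]subr0 -(mul0r (2 * j21)^-1) -cond1.
  by field; rewrite n21.
have e212 : h212 = (- j12 * h111 - j21 * h122 - h222 * (j22 - j11)) / (2 * j12).
  rewrite -[LHS]subr0 -(mul0r (2 * j12)^-1) -cond2.
  by field; rewrite n12.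
have e11 : j11 = j22 - s1 - s2 by rewrite -addrA -opprD sum_s; ring.
have e12 : j12 = - (s1 * s2) / j21 by rewrite prod_s opprK mulfK.
have nprod : s1 * s2 != 0 by rewrite prod_s oppr_eq0 mulf_neq0.
move: nprod; rewrite mulf_eq0 negb_or => /andP[n1 n2].
by rewrite /mode_form e112 e212 e11 e12; field; rewrite n1 n2 n21.
Qed.

Lemma mode_form_offdiag_eq0 :
  mode_form s1 s2 = 0 <->
  j21 ^+ 2 * h122 + j12 * j21 * h111 = - s1 * (j21 * h222 + j12 * h211).
Proof.
have n2 : s2 != 0.
  by apply: contra_neq n12 => s20; move/eqP: prod_s; rewrite s20 mulr0 eq_sym
    oppr_eq0 mulf_eq0 (negbTE n21) orbF => /eqP.
have nz : - ((s1 - s2) * s2) != 0 by rewrite oppr_eq0 mulf_neq0 // subr_eq0.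
rewrite -(mulf_eq0_iff (mode_form s1 s2) n21) mode_form_reduced mulf_eq0_iff //.
by rewrite mulNr; split=> [/eqP|->]; [rewrite addr_eq0 => /eqP | rewrite addNr].
Qed.

End ModeForm.

Lemma Gmat_diag_eq0 (R : numFieldType)
    (j11 j12 j21 j22 h111 h112 h122 h211 h212 h222 x y : R) (Rm : 'M[R]_2) a b :
  j12 != 0 -> j21 != 0 -> Rm \in unitmx ->
  Rm *m Jmat j11 j12 j21 j22 *m invmx Rm = diag2 x y ->
  Gmat Rm (Hmats h111 h112 h122 h211 h212 h222) a b b = 0 <->
  mode_form j12 j21 h111 h112 h122 h211 h212 h222
    (eigval x y a - j11) (eigval x y b - j11) = 0.
Proof.
move=> n12 n21 unitR diagR.
have nR := left_eigvec_head_neq0 n21 unitR diagR a.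
have nL := right_eigvec_head_neq0 n12 unitR diagR b.
rewrite (Gmat_diag_mode_form h111 h112 h122 h211 h212 h222 n12 n21
  (left_eigvec_Jmat unitR diagR a) (right_eigvec_Jmat unitR diagR b)).
by rewrite mulf_eq0_iff // !mulf_neq0 ?expf_neq0 ?invr_eq0 ?mulf_neq0 ?expf_neq0 ?pnatr_eq0.
Qed.

Lemma vanishing_patterns (R : fieldType) (g1 g2 P Q c1 c2 k X : R) :
  c1 != c2 -> k != 0 -> P = k * X ->
  (g1 = 0 <-> P = c1 * Q) -> (g2 = 0 <-> P = c2 * Q) ->
  ((g1 = 0 /\ g2 = 0) <-> (X = 0 /\ Q = 0)) /\
  ((g1 = 0 /\ g2 <> 0) <-> (P = c1 * Q /\ Q <> 0)) /\
  ((g1 <> 0 /\ g2 = 0) <-> (P = c2 * Q /\ Q <> 0)) /\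
  ((g1 <> 0 /\ g2 <> 0) <-> (P <> c1 * Q /\ P <> c2 * Q)).
Proof.
move=> nc nk eP e1 e2.
have both_Q0 : P = c1 * Q -> P = c2 * Q -> Q = 0.
  have nd : c1 - c2 != 0 by rewrite subr_eq0.
  by move=> h1 h2; apply/(mulf_eq0_iff _ nd); rewrite mulrBl -h1 -h2 subrr.
have Q0_c12 : Q = 0 -> (P = c1 * Q <-> P = c2 * Q) by move=> ->; rewrite !mulr0.
have Q0_X : Q = 0 -> (P = c1 * Q <-> X = 0) by move=> ->; rewrite mulr0 eP mulf_eq0_iff.
tauto.
Qed.

Theorem theorem3 (R : realFieldType)
  (j11 j12 j21 j22 h111 h112 h122 h211 h212 h222 Delta : R)
  (Rm : 'M[R]_2) :
  j12 * j21 != 0 ->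
  Delta ^+ 2 = (j11 - j22) ^+ 2 + 4 * j12 * j21 ->
  0 < Delta ->
  Rm \in unitmx ->
  Rm *m Jmat j11 j12 j21 j22 *m invmx Rm =
    diag2 (2^-1 * (j11 + j22 + Delta)) (2^-1 * (j11 + j22 - Delta)) ->
  let G := Gmat Rm (Hmats h111 h112 h122 h211 h212 h222) in
  let condA1 := j21 * (2 * h112 + h222) + j12 * h211 - h111 * (j22 - j11) = 0 in
  let condA2 := j12 * (2 * h212 + h111) + j21 * h122 + h222 * (j22 - j11) = 0 in
  let P := j21 ^+ 2 * h122 + j12 * j21 * h111 in
  let Q := j21 * h222 + j12 * h211 in
  let cm := 2^-1 * (j11 - j22 - Delta) in
  let cp := 2^-1 * (j11 - j22 + Delta) in
  (* (a) *)
  ((G i1 i1 i1 = 0 /\ G i2 i2 i2 = 0) <-> (condA1 /\ condA2)) /\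
  (* (b) and consequences *)
  (condA1 -> condA2 ->
     (G i1 i2 i2 = 0 <-> P = cm * Q) /\
     (G i2 i1 i1 = 0 <-> P = cp * Q) /\
     ((G i1 i2 i2 = 0 /\ G i2 i1 i1 = 0) <->
        (j21 * h122 + j12 * h111 = 0 /\ j21 * h222 + j12 * h211 = 0)) /\
     ((G i1 i2 i2 = 0 /\ G i2 i1 i1 <> 0) <-> (P = cm * Q /\ Q <> 0)) /\
     ((G i1 i2 i2 <> 0 /\ G i2 i1 i1 = 0) <-> (P = cp * Q /\ Q <> 0)) /\
     ((G i1 i2 i2 <> 0 /\ G i2 i1 i1 <> 0) <-> (P <> cm * Q /\ P <> cp * Q))).
Proof.
move=> n1221 hD Dpos unitR diagR G cA1 cA2 P Q cm cp.
move: n1221; rewrite mulf_eq0 negb_or => /andP[n12 n21].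
set vp := 2^-1 * (j11 + j22 + Delta) in diagR.
set vm := 2^-1 * (j11 + j22 - Delta) in diagR.
have sum_s : (vp - j11) + (vm - j11) = j22 - j11 by rewrite /vp /vm; field.
have prod_s : (vp - j11) * (vm - j11) = - (j12 * j21).
  transitivity (4^-1 * ((j22 - j11) ^+ 2 - Delta ^+ 2)); first by rewrite /vp /vm; field.
  by rewrite hD; field.
have ns : vp - j11 != vm - j11.
  by rewrite -subr_eq0 [_ - _](_ : _ = Delta) ?gt_eqF // /vp /vm; field.
rewrite /G !(Gmat_diag_eq0 h111 h112 h122 h211 h212 h222 _ _ n12 n21 unitR diagR) /=.
split; first exact: mode_form_diag_eq0.
move=> c1 c2.
have E1 := mode_form_offdiag_eq0 n12 n21 ns sum_s prod_s c1 c2.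
rewrite addrC in sum_s; rewrite mulrC in prod_s; rewrite eq_sym in ns.
have E2 := mode_form_offdiag_eq0 n12 n21 ns sum_s prod_s c1 c2.
rewrite [cm](_ : _ = - (vp - j11)); last by rewrite /cm /vp; field.
rewrite [cp](_ : _ = - (vm - j11)); last by rewrite /cp /vm; field.
do 2!split=> //.
by apply: (vanishing_patterns (k := j21)) E1 E2; [rewrite eqr_opp eq_sym | | ring].
Qed.
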